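(* Let $\mathfrak g$ be a Lie algebra over a field $\mathbb k$ and $(X,\Delta,q)$ its associated binary SD object. Define $\Psi^2$ on Lie $2$-cochains by $\Psi^2(\phi)((a,x)\otimes(b,y))=(0,\phi(x,y))$. Then $\Psi^2$ maps $Z^2_{\rm Lie}(\mathfrak g;\mathfrak g)$ into $Z^2_{\rm BSD}(X;X)$ and $B^2_{\rm Lie}(\mathfrak g;\mathfrak g)$ into $B^2_{\rm BSD}(X;X)$, hence induces a well-defined homomorphism $H^2_{\rm Lie}(\mathfrak g;\mathfrak g)\to H^2_{\rm BSD}(X;X)$.
   Context: Associated binary SD object: $X=\mathbb k\oplus\mathfrak g$ (elements $(a,x)$), $\Delta(a,x)=(a,x)\otimes(1,0)+(1,0)\otimes(0,x)$, $\varepsilon(a,x)=a$, $q((a,x)\otimes(b,y))=(ab,\,bx+[x,y])$. Sweedler notation $\Delta(w)=w^{(1)}\otimes w^{(2)}$; $\tau$ is the flip $u\otimes v\mapsto v\otimes u$. BSD cohomology: $C^1_{\rm BSD}(X;X)$ = linear $f\colon X\to X$ with $\Delta f=(f\otimes\mathbb 1+\mathbb 1\otimes f)\Delta$; $C^2_{\rm BSD}(X;X)$ = linear $\phi\colon X\otimes X\to X$ with $\Delta\phi=(\phi\otimes q+q\otimes\phi)(\mathbb 1\otimes\tau\otimes\mathbb 1)(\Delta\otimes\Delta)$; $\delta^1f(u\otimes v)=f(q(u\otimes v))-q(f(u)\otimes v)-q(u\otimes f(v))$; $\delta^2\phi(u\otimes v\otimes w)=q(\phi(u\otimes v)\otimes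 w)+\phi(q(u\otimes v)\otimes w)-\phi(q(u\otimes w^{(1)})\otimes q(v\otimes w^{(2)}))-q(\phi(u\otimes w^{(1)})\otimes q(v\otimes w^{(2)}))-q(q(u\otimes w^{(1)})\otimes\phi(v\otimes w^{(2)}))$; $Z^2_{\rm BSD}=C^2_{\rm BSD}\cap\ker\delta^2$, $B^2_{\rm BSD}=\delta^1(C^1_{\rm BSD})$, $H^2_{\rm BSD}=Z^2_{\rm BSD}/B^2_{\rm BSD}$. Lie cohomology: $2$-cochains are alternating bilinear $\phi\colon\mathfrak g\times\mathfrak g\to\mathfrak g$; $\delta^2\phi(x,y,z)=[\phi(x,y),z]+[\phi(y,z),x]+[\phi(z,x),y]+\phi([x,y],z)+\phi([y,z],x)+\phi([z,x],y)$; for linear $f\colon\mathfrak g\to\mathfrak g$, $\delta^1f(x,y)=f([x,y])-[f(x),y]-[x,f(y)]$; $Z^2_{\rm Lie}=\ker\delta^2$, $B^2_{\rm Lie}=\operatorname{im}\delta^1$, $H^2_{\rm Lie}=Z^2_{\rm Lie}/B^2_{\rm Lie}$. *)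

From HB Require Import structures.
From mathcomp Require Import all_boot all_order all_algebra.
Set Implicit Arguments. Unset Strict Implicit. Unset Printing Implicit Defensive.
Import GRing.Theory.
Local Open Scope ring_scope.

Section Defs.
Variable K : fieldType.

Definition lin (V W : lmodType K) (f : V -> W) : Prop :=
  forall (a : K) (u v : V), f (a *: u + v) = a *: f u + f v.

Definition bilin (V W U : lmodType K) (B : V -> W -> U) : Prop :=
  (forall (a : K) (v v' : V) (w : W), B (a *: v + v') w = a *: B v w + B v' w) /\
  (forall (a : K) (v : V) (w w' : W), B v (a *: w + w') = a *: B v w + B v w').

(* Elements of V (x) W are represented by finite formal sums  sum_i v_i (x) w_i
   (a seq of pairs); two such sums are equal in V (x) W iff every bilinear map
   out of V x W (into any K-vector space) takes the same value on them
   (universal property of the tensor product). *)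
Definition tensor_eq (V W : lmodType K) (s t : seq (V * W)) : Prop :=
  forall (U : lmodType K) (B : V -> W -> U), bilin B ->
    \sum_(p <- s) B p.1 p.2 = \sum_(p <- t) B p.1 p.2.

Definition is_lie_bracket (g : lmodType K) (br : g -> g -> g) : Prop :=
  [/\ bilin br,
      (forall x, br x x = 0) &
      (forall x y z, br x (br y z) + br y (br z x) + br z (br x y) = 0)].

Variable g : lmodType K.
Variable br : g -> g -> g.

Definition X : lmodType K := (K^o * g)%type.

Definition unitX : X := ((1 : K^o), (0 : g)).

Definition DeltaX (u : X) : seq (X * X) :=
  [:: (u, unitX); (unitX, ((0 : K^o), u.2))].

Definition epsX (u : X) : K := u.1.

Definition qX (u v : X) : X :=
  ((u.1 * v.1 : K^o), v.1 *: u.2 + br u.2 v.2).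

Definition C1_BSD (f : X -> X) : Prop :=
  lin f /\
  forall u : X,
    tensor_eq (DeltaX (f u))
      ([seq (f p.1, p.2) | p <- DeltaX u] ++ [seq (p.1, f p.2) | p <- DeltaX u]).

(* linear maps X (x) X -> X are represented by bilinear maps X -> X -> X *)
Definition C2_BSD (phi : X -> X -> X) : Prop :=
  bilin phi /\
  forall u v : X,
    tensor_eq (DeltaX (phi u v))
      ([seq (phi p.1 r.1, qX p.2 r.2) | p <- DeltaX u, r <- DeltaX v] ++
       [seq (qX p.1 r.1, phi p.2 r.2) | p <- DeltaX u, r <- DeltaX v]).

Definition delta1_BSD (f : X -> X) (u v : X) : X :=
  f (qX u v) - qX (f u) v - qX u (f v).

Definition delta2_BSD (phi : X -> X -> X) (u v w : X) : X :=
  qX (phi u v) w + phi (qX u v) w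
  - \sum_(p <- DeltaX w)
      (phi (qX u p.1) (qX v p.2) + qX (phi u p.1) (qX v p.2)
       + qX (qX u p.1) (phi v p.2)).

Definition Z2_BSD (phi : X -> X -> X) : Prop :=
  C2_BSD phi /\ forall u v w, delta2_BSD phi u v w = 0.

Definition B2_BSD (phi : X -> X -> X) : Prop :=
  exists f : X -> X, C1_BSD f /\ forall u v, phi u v = delta1_BSD f u v.

Definition Lie_cochain2 (phi : g -> g -> g) : Prop :=
  bilin phi /\ forall x, phi x x = 0.

Definition delta2_Lie (phi : g -> g -> g) (x y z : g) : g :=
  br (phi x y) z + br (phi y z) x + br (phi z x) y
  + phi (br x y) z + phi (br y z) x + phi (br z x) y.

Definition delta1_Lie (f : g -> g) (x y : g) : g :=
  f (br x y) - br (f x) y - br x (f y).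

Definition Z2_Lie (phi : g -> g -> g) : Prop :=
  Lie_cochain2 phi /\ forall x y z, delta2_Lie phi x y z = 0.

Definition B2_Lie (phi : g -> g -> g) : Prop :=
  exists f : g -> g, lin f /\ forall x y, phi x y = delta1_Lie f x y.

Definition Psi2 (phi : g -> g -> g) (u v : X) : X :=
  ((0 : K^o), phi u.2 v.2).

End Defs.

(* Psi^2(phi) only sees the g-components and vanishes as soon as one argument
   lies in k (+) 0, so in the coproduct compatibility condition every term
   involving the unit (1,0) drops out.  Expanding delta^2_BSD on Psi^2(phi)
   with Delta w = w (x) 1 + 1 (x) (0,z) yields exactly the six terms of
   delta^2_Lie phi once phi and the bracket are antisymmetric, so
   delta^2_BSD Psi^2(phi) = (0, delta^2_Lie phi).  Likewise, with
   Psi^1(f)(a,x) = (0, f x), which is a BSD 1-cochain, one has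
   delta^1_BSD Psi^1(f) = Psi^2(delta^1_Lie f). *)
From mathcomp Require Import all_boot all_order all_algebra ssrAC.
Set Implicit Arguments. Unset Strict Implicit. Unset Printing Implicit Defensive.
Import GRing.Theory.
Local Open Scope ring_scope.

Section Bilinear.
Variables (K : fieldType) (V W U : lmodType K) (B : V -> W -> U).
Hypothesis HB : bilin B.

Lemma bilin0l w : B 0 w = 0.
Proof. by have := HB.1 (-1) 0 0 w; rewrite scaler0 addr0 scaleN1r addNr. Qed.

Lemma bilin0r v : B v 0 = 0.
Proof. by have := HB.2 (-1) v 0 0; rewrite scaler0 addr0 scaleN1r addNr. Qed.

Lemma bilinDl v v' w : B (v + v') w = B v w + B v' w.
Proof. by have := HB.1 1 v v' w; rewrite !scale1r. Qed.

Lemma bilinDr v w w' : B v (w + w') = B v w + B v w'.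
Proof. by have := HB.2 1 v w w'; rewrite !scale1r. Qed.

Lemma bilinZl a v w : B (a *: v) w = a *: B v w.
Proof. by have := HB.1 a v 0 w; rewrite !addr0 bilin0l addr0. Qed.

Lemma bilinNl v w : B (- v) w = - B v w.
Proof. by rewrite -scaleN1r bilinZl scaleN1r. Qed.

End Bilinear.

Lemma alt_bilin_antisym (K : fieldType) (V U : lmodType K) (B : V -> V -> U) :
  bilin B -> (forall x, B x x = 0) -> forall x y, B x y = - B y x.
Proof.
move=> HB Balt x y; apply/eqP; rewrite -addr_eq0; apply/eqP.
by have := Balt (x + y); rewrite (bilinDl HB) !(bilinDr HB) !Balt add0r addr0.
Qed.

Lemma lin0 (K : fieldType) (V W : lmodType K) (f : V -> W) : lin f -> f 0 = 0.
Proof. by move=> Hf; have := Hf (-1) 0 0; rewrite scaler0 addr0 scaleN1r addNr. Qed.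

Section Psi.
Variables (K : fieldType) (g : lmodType K) (br : g -> g -> g).
Hypothesis Hbr : bilin br.

Definition Psi1 (f : g -> g) (u : X g) : X g := ((0 : K^o), f u.2).

Let zeroX : ((0 : K^o), (0 : g)) = 0 :> X g. Proof. by []. Qed.

Lemma Psi1_C1_BSD (f : g -> g) : lin f -> C1_BSD (Psi1 f).
Proof.
move=> Hf; split=> [a u v | u U B HB].
  by apply: injective_projections; rewrite /= ?scaler0 ?addr0 ?Hf.
rewrite /DeltaX /Psi1 /unitX /= !big_cons !big_nil /= (lin0 Hf) zeroX.
by rewrite (bilin0l HB) (bilin0r HB) !addr0 !add0r.
Qed.

Lemma Psi2_delta1_Lie (f : g -> g) : lin f ->
  forall u v, Psi2 (delta1_Lie br f) u v = delta1_BSD br (Psi1 f) u v.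
Proof.
move=> Hf [a x] [b y]; rewrite /delta1_BSD /Psi2 /Psi1 /qX /delta1_Lie /=.
apply: injective_projections => /=; first by rewrite !mul0r !mulr0 !subr0.
by rewrite Hf scale0r add0r opprD !addrA [b *: f x + _]addrC addrK.
Qed.

Lemma Psi2_bilin (phi : g -> g -> g) : bilin phi -> bilin (Psi2 phi).
Proof.
move=> [Hl Hr]; split=> a u v w;
  by apply: injective_projections; rewrite /= ?scaler0 ?addr0 ?Hl ?Hr.
Qed.

Lemma Psi2_C2_BSD (phi : g -> g -> g) : bilin phi -> C2_BSD br (Psi2 phi).
Proof.
move=> Hphi; split; first exact: Psi2_bilin.
move=> u v U B HB; rewrite /DeltaX /Psi2 /qX /unitX /= !big_cons !big_nil /=.
rewrite (bilin0l Hphi) !(bilin0r Hphi) mulr1 scaler0 (bilin0l Hbr) addr0 zeroX.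
by rewrite !(bilin0l HB) !(bilin0r HB) !add0r !addr0.
Qed.

Hypothesis br_alt : forall x, br x x = 0.

Lemma delta2_BSD_Psi2 (phi : g -> g -> g) :
  bilin phi -> (forall x, phi x x = 0) -> forall u v w,
    delta2_BSD br (Psi2 phi) u v w = ((0 : K^o), delta2_Lie br phi u.2 v.2 w.2).
Proof.
move=> Hphi phi_alt [a x] [b y] [c z].
rewrite /delta2_BSD /delta2_Lie /DeltaX /Psi2 /qX /unitX /= !big_cons big_nil /=.
apply: injective_projections => /=; first by rewrite !mul0r !mulr0 !addr0 subrr.
rewrite !(bilin0r Hphi) !(bilin0r Hbr) !(bilin0l Hbr) !scale0r !mulr0 !mulr1.
rewrite !scale1r !addr0 !add0r !(bilinDl Hphi) !(bilinZl Hphi).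
rewrite (alt_bilin_antisym Hphi phi_alt z x) (alt_bilin_antisym Hbr br_alt z x).
rewrite (alt_bilin_antisym Hbr br_alt (phi y z)).
rewrite (alt_bilin_antisym Hphi phi_alt (br y z)) (bilinNl Hbr) (bilinNl Hphi).
rewrite scaler0 addr0 !opprD !addrA.
(* the terms c *: phi x y and b *: phi x z cancel in pairs *)
by rewrite (ACl ((1*5)*(3*7)*2*10*8*4*9*6)%AC) /= !subrr !add0r.
Qed.

Lemma Psi2_Z2 (phi : g -> g -> g) : Z2_Lie br phi -> Z2_BSD br (Psi2 phi).
Proof.
move=> [[Hphi phi_alt] cocycle]; split; first exact: Psi2_C2_BSD.
by move=> u v w; rewrite delta2_BSD_Psi2 // cocycle.
Qed.

End Psi.

Lemma Psi2_B2 (K : fieldType) (g : lmodType K) (br : g -> g -> g)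
    (phi : g -> g -> g) :
  B2_Lie br phi -> B2_BSD br (Psi2 phi).
Proof.
move=> [f [Hf Ephi]]; exists (Psi1 f); split; first exact: Psi1_C1_BSD.
by move=> u v; rewrite -Psi2_delta1_Lie // /Psi2 Ephi.
Qed.

Section Psi2Linear.
Variables (K : fieldType) (g : lmodType K).

Lemma Psi2_scale_add (a : K) (phi phi' : g -> g -> g) u v :
  Psi2 (fun x y => a *: phi x y + phi' x y) u v = a *: Psi2 phi u v + Psi2 phi' u v.
Proof. by apply: injective_projections; rewrite /= ?scaler0 ?addr0. Qed.

Lemma Psi2_sub (phi phi' : g -> g -> g) u v :
  Psi2 (fun x y => phi x y - phi' x y) u v = Psi2 phi u v - Psi2 phi' u v.
Proof. by apply: injective_projections; rewrite /= ?subrr. Qed.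

End Psi2Linear.

Theorem mainTheorem4 (K : fieldType) (g : lmodType K) (br : g -> g -> g)
    (Hlie : is_lie_bracket br) :
  (forall phi : g -> g -> g, Z2_Lie br phi -> Z2_BSD br (Psi2 phi)) /\
  (forall phi : g -> g -> g, B2_Lie br phi -> B2_BSD br (Psi2 phi)) /\
  (forall phi phi' : g -> g -> g, Z2_Lie br phi -> Z2_Lie br phi' ->
     B2_Lie br (fun x y => phi x y - phi' x y) ->
     B2_BSD br (fun u v => Psi2 phi u v - Psi2 phi' u v)) /\
  (forall (a : K) (phi phi' : g -> g -> g) (u v : X g),
     Psi2 (fun x y => a *: phi x y + phi' x y) u v
     = a *: Psi2 phi u v + Psi2 phi' u v).
Proof.
have [Hbr br_alt _] := Hlie.
split; first exact: Psi2_Z2.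
split; first exact: Psi2_B2.
split; last exact: Psi2_scale_add.
move=> phi phi' _ _ /Psi2_B2 [f [Hf Ef]].
by exists f; split=> // u v; rewrite -Psi2_sub Ef.
Qed.
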